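(* Let $\mathbf{E},\mathbf{Y}$ be Euclidean spaces, $\mathcal{X}\subset\mathbf{E}$ nonempty closed convex, $h\colon\mathbf{Y}\to\mathbb{R}$ convex, $F\colon\mathbf{E}\to\mathbf{Y}$ differentiable with Jacobian $\nabla F(x)$, and $f=h\circ F$. Let $\mathcal{X}^*=\operatorname{argmin}_{\mathcal{X}}f$ be nonempty and fix $\bar x\in\mathcal{X}^*$. Suppose for some $\epsilon,\mu,\rho>0$: (approximation) $|f(y)-f_x(y)|\le\frac\rho2\|y-x\|^2$ for all $x\in\mathcal{X}\cap B_\epsilon(\bar x)$, $y\in\mathcal{X}$, where $f_x(y):=h(F(x)+\nabla F(x)(y-x))$; (sharpness) $f(x)-\inf_{\mathcal{X}}f\ge\mu\,\mathrm{dist}(x,\mathcal{X}^* )$ for all $x\in\mathcal{X}\cap B_\epsilon(\bar x)$. Let $\beta\ge\rho$ and let $x_0\in B_{\epsilon/2}(\bar x)\cap\mathcal{X}$ satisfy $$f(x_0)-\min_{\mathcal{X}}f\le\min\Big\{\frac{\beta\epsilon^2}{25},\frac{\mu^2}{2\beta}\Big\}.$$ Consider the prox-linear iterates $x_{k+1}=\operatorname{argmin}_{x\in\mathcal{X}}\big\{h\big(F(x_k)+\nabla F(x_k)(x-x_k)\big)+\frac\beta2\|x-x_k\|^2\big\}$. Then all $x_k$ lie in $B_\epsilon(\bar x)$ and for all $k\ge0$ $$\mathrm{dist}(x_{k+1},\mathcal{X}^* )\le\frac\beta\mu\mathrm{dist}^2(x_k,\mathcal{X}^* ),\qquad f(x_{k+1})-\min_{\mathcal{X}}f\le\frac{\beta}{\mu^2}\big(f(x_k)-\min_{\mathcal{X}}f\big)^2.$$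 Moreover, the iterates converge to some $x_\infty\in\mathcal{X}^*$ with $\|x_k-x_\infty\|\le\frac{2\sqrt2\mu}{\beta}\big(\frac12\big)^{2^{k-1}}$ for all $k\ge0$.
   Context: $\|\cdot\|$ is the Euclidean norm on $\mathbf{E}$, $B_\epsilon(z)$ the closed ball of radius $\epsilon$ about $z$, and $\mathrm{dist}$ the Euclidean distance. *)

From mathcomp Require Import ssreflect ssrfun ssrbool eqtype ssrnat seq fintype bigop.
From Stdlib Require Import Reals ClassicalEpsilon.

Set Implicit Arguments.
Unset Strict Implicit.

Local Open Scope R_scope.

Definition vec (n : nat) := 'I_n -> R.

Definition vadd n (u v : vec n) : vec n := fun i => u i + v i.
Definition vsub n (u v : vec n) : vec n := fun i => u i - v i.
Definition vscale n (a : R) (u : vec n) : vec n := fun i => a * u i.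

Definition einner n (u v : vec n) : R := \big[Rplus/0]_(i < n) (u i * v i).
Definition enorm n (u : vec n) : R := sqrt (einner u u).

Definition mat (m n : nat) := 'I_m -> 'I_n -> R.
Definition mapply m n (A : mat m n) (v : vec n) : vec m :=
  fun i => \big[Rplus/0]_(j < n) (A i j * v j).

Definition eball n (z : vec n) (e : R) (x : vec n) : Prop := enorm (vsub x z) <= e.

Definition enonempty n (S : vec n -> Prop) : Prop := exists x, S x.
Definition eclosed_set n (S : vec n -> Prop) : Prop :=
  forall x, (forall e, 0 < e -> exists y, S y /\ enorm (vsub y x) < e) -> S x.
Definition econvex_set n (S : vec n -> Prop) : Prop :=
  forall x y t, S x -> S y -> 0 <= t <= 1 ->
    S (vadd (vscale t x) (vscale (1 - t) y)).
Definition econvex_fun m (h : vec m -> R) : Prop :=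
  forall a b t, 0 <= t <= 1 ->
    h (vadd (vscale t a) (vscale (1 - t) b)) <= t * h a + (1 - t) * h b.

Definition has_jacobian n m (F : vec n -> vec m) (J : vec n -> mat m n) : Prop :=
  forall x eps, 0 < eps -> exists delta, 0 < delta /\
    forall y, enorm (vsub y x) < delta ->
      enorm (vsub (vsub (F y) (F x)) (mapply (J x) (vsub y x))) <= eps * enorm (vsub y x).

Definition eargmin n (f : vec n -> R) (X : vec n -> Prop) (x : vec n) : Prop :=
  X x /\ forall y, X y -> f x <= f y.

(* Euclidean distance to a set: the infimum of ||x - y|| over y in S
   (chosen by epsilon; meaningful when S is enonempty) *)
Definition is_glb_dist n (S : vec n -> Prop) (x : vec n) (d : R) : Prop :=
  (forall y, S y -> d <= enorm (vsub x y)) /\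
  (forall d', (forall y, S y -> d' <= enorm (vsub x y)) -> d' <= d).
Definition edist n (S : vec n -> Prop) (x : vec n) : R :=
  epsilon (inhabits 0) (is_glb_dist S x).

Definition emodel n m (h : vec m -> R) (F : vec n -> vec m) (J : vec n -> mat m n)
  (x y : vec n) : R := h (vadd (F x) (mapply (J x) (vsub y x))).

(* One prox-linear step from an iterate x_k in B_eps(xbar) is analysed through
   the three-point inequality of its strongly convex subproblem, which gives
     (a) beta/2 |x_(k+1) - x_k|^2 <= f(x_k) - f*,
     (b) f(x_(k+1)) - f* <= beta D_k^2,        D_k := dist(x_k, X* ),
     (c) |x_(k+1) - x_k| <= (1 + sqrt 2) D_k.
   With sharpness, (b) gives D_(k+1) <= (beta/mu) D_k^2 and the quadratic
   decrease of the gap.  As (beta/mu) D_0 <= 1/2, the scaled distances decay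
   doubly exponentially; a potential argument (tail_factor) bounds the length
   of the remaining path by a multiple of D_k.  This keeps every iterate in the
   ball (strong induction, using the numerical budget of the hypothesis on x_0)
   and makes the sequence Cauchy.  The limit lies in X (closed) and minimizes f
   because convex functions on R^m are upper semicontinuous. *)

From mathcomp Require Import ssreflect ssrfun ssrbool eqtype ssrnat seq fintype bigop.
From Stdlib Require Import Reals ClassicalEpsilon Lra Classical FunctionalExtensionality.
From HB Require Import structures.

Set Implicit Arguments.
Unset Strict Implicit.
Local Open Scope R_scope.

Lemma Rplus_assoc_law : associative Rplus.
Proof. by move=> a b c; rewrite Rplus_assoc. Qed.
HB.instance Definition _ :=
  Monoid.isComLaw.Build R 0 Rplus Rplus_assoc_law Rplus_comm Rplus_0_l.

Lemma sum_add n (G H : 'I_n -> R) :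
  \big[Rplus/0]_(i < n) (G i + H i) =
  \big[Rplus/0]_(i < n) G i + \big[Rplus/0]_(i < n) H i.
Proof. exact: big_split. Qed.

Lemma sum_recr n (G : 'I_n.+1 -> R) :
  \big[Rplus/0]_(i < n.+1) G i =
  \big[Rplus/0]_(i < n) G (widen_ord (leqnSn n) i) + G ord_max.
Proof. exact: big_ord_recr. Qed.

Lemma sum_scale n a (G : 'I_n -> R) :
  \big[Rplus/0]_(i < n) (a * G i) = a * \big[Rplus/0]_(i < n) G i.
Proof. by rewrite (big_morph (Rmult a) (Rmult_plus_distr_l a) (Rmult_0_r a)). Qed.

Lemma sum_le n (G H : 'I_n -> R) : (forall i, G i <= H i) ->
  \big[Rplus/0]_(i < n) G i <= \big[Rplus/0]_(i < n) H i.
Proof. by move=> GH; apply: (big_ind2 Rle (Rle_refl 0)) => // *; apply: Rplus_le_compat. Qed.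

Lemma sum_ge0 (I : Type) (r : seq I) (P : pred I) (G : I -> R) :
  (forall i, P i -> 0 <= G i) -> 0 <= \big[Rplus/0]_(i <- r | P i) G i.
Proof. by move=> G0; apply: (big_ind (fun a => 0 <= a)) => // *; lra. Qed.

Lemma sum_term n (G : 'I_n -> R) i0 : (forall i, 0 <= G i) ->
  G i0 <= \big[Rplus/0]_(i < n) G i.
Proof.
move=> G0; rewrite (bigD1 i0) //= -[X in X <= _]Rplus_0_r.
by apply: Rplus_le_compat_l; apply: sum_ge0.
Qed.

Lemma sum_abs n (G : 'I_n -> R) :
  Rabs (\big[Rplus/0]_(i < n) G i) <= \big[Rplus/0]_(i < n) Rabs (G i).
Proof.
apply: (big_ind2 (fun a b => Rabs a <= b)); first by rewrite Rabs_R0; lra.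
  by move=> a1 b1 a2 b2 H1 H2; apply: Rle_trans (Rabs_triang a1 a2) _; lra.
by move=> i _; lra.
Qed.

Lemma sum_delta n (i : 'I_n) (G : 'I_n -> R) :
  \big[Rplus/0]_(j < n) (if i == j then G j else 0) = G i.
Proof. by rewrite -big_mkcond (big_pred1 i) // => j; rewrite /= eq_sym. Qed.

Lemma sum_const n b : \big[Rplus/0]_(i < n) b = INR n * b.
Proof. by elim: n => [|n IH]; rewrite ?big_ord0 ?sum_recr ?IH ?S_INR /=; ring. Qed.

Lemma einner_ge0 n (u : vec n) : 0 <= einner u u.
Proof. by apply: sum_ge0 => i _; nra. Qed.

Lemma enorm_ge0 n (u : vec n) : 0 <= enorm u.
Proof. exact: sqrt_pos. Qed.

Lemma enorm_sq n (u : vec n) : enorm u ^ 2 = einner u u.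
Proof. exact/pow2_sqrt/einner_ge0. Qed.

Lemma einner_sym n (u v : vec n) : einner u v = einner v u.
Proof. by apply: eq_bigr => i _; ring. Qed.

Lemma einner_comb n a b (u v : vec n) :
  einner (fun i => a * u i + b * v i) (fun i => a * u i + b * v i) =
  a ^ 2 * einner u u + 2 * a * b * einner u v + b ^ 2 * einner v v.
Proof.
rewrite /einner -!sum_scale -!sum_add.
by apply: eq_bigr => i _; ring.
Qed.

Lemma coord_sq_le n (u : vec n) i : u i * u i <= einner u u.
Proof. exact: (@sum_term _ (fun j => u j * u j) i (fun j => Rle_0_sqr (u j))). Qed.

Lemma coord_le n (u : vec n) i : Rabs (u i) <= enorm u.
Proof.
rewrite -sqrt_Rsqr_abs; apply: sqrt_le_1_alt; exact: coord_sq_le.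
Qed.

Lemma einner_null n (u v : vec n) : einner u u = 0 -> einner u v = 0.
Proof.
move=> Z; apply: big1 => i _.
have Hi : u i * u i <= 0 by rewrite -Z; exact: coord_sq_le.
have -> : u i = 0 by nra.
ring.
Qed.

Lemma cauchy_schwarz n (u v : vec n) : einner u v <= enorm u * enorm v.
Proof.
have Hu := enorm_sq u; have Hv := enorm_sq v.
have Nu := enorm_ge0 u; have Nv := enorm_ge0 v.
case: (Req_dec (enorm u) 0) => [Eu|NZu].
  by rewrite einner_null -?Hu ?Eu; [nra | ring].
case: (Req_dec (enorm v) 0) => [Ev|NZv].
  by rewrite einner_sym einner_null -?Hv ?Ev; [nra | ring].
(* 0 <= | |v| u - |u| v |^2 = 2 |u| |v| ( |u| |v| - <u,v> ) *)
have := einner_ge0 (fun i => enorm v * u i + (- enorm u) * v i).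
rewrite einner_comb -Hu -Hv => H.
have P : 0 < enorm u * enorm v by apply: Rmult_lt_0_compat; lra.
nra.
Qed.

Lemma enorm_scale n a (u : vec n) : enorm (fun i => a * u i) = Rabs a * enorm u.
Proof.
rewrite /enorm (_ : einner _ _ = a ^ 2 * einner u u); last first.
  by rewrite /einner -sum_scale; apply: eq_bigr => i _; ring.
rewrite -pow2_abs sqrt_mult ?sqrt_pow2 //; [exact: Rabs_pos | nra | exact: einner_ge0].
Qed.

Lemma enorm_add n (u v : vec n) : enorm (fun i => u i + v i) <= enorm u + enorm v.
Proof.
have Nu := enorm_ge0 u; have Nv := enorm_ge0 v.
rewrite -(sqrt_pow2 (enorm u + enorm v)); last lra.
apply: sqrt_le_1_alt.
rewrite (_ : (fun i => u i + v i) = (fun i => 1 * u i + 1 * v i)); last first.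
  by apply: functional_extensionality => i; ring.
rewrite einner_comb -!enorm_sq.
have := cauchy_schwarz u v; nra.
Qed.

Lemma enorm_self n (a : vec n) : enorm (vsub a a) = 0.
Proof.
rewrite (_ : vsub a a = fun i => 0 * a i); last first.
  by apply: functional_extensionality => i; rewrite /vsub; ring.
by rewrite enorm_scale Rabs_R0; ring.
Qed.

Lemma enorm_tri n (a b c : vec n) :
  enorm (vsub a c) <= enorm (vsub a b) + enorm (vsub b c).
Proof.
rewrite (_ : vsub a c = fun i => vsub a b i + vsub b c i); first exact: enorm_add.
by apply: functional_extensionality => i; rewrite /vsub; ring.
Qed.

Lemma enorm_sym n (a b : vec n) : enorm (vsub a b) = enorm (vsub b a).
Proof.
rewrite (_ : vsub a b = fun i => -1 * vsub b a i); last first.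
  by apply: functional_extensionality => i; rewrite /vsub; ring.
by rewrite enorm_scale Rabs_Ropp Rabs_R1; ring.
Qed.

Lemma enorm_sq_comb n t (y p c : vec n) :
  enorm (vsub (vadd (vscale t y) (vscale (1 - t) p)) c) ^ 2 =
  t * enorm (vsub y c) ^ 2 + (1 - t) * enorm (vsub p c) ^ 2
  - t * (1 - t) * enorm (vsub y p) ^ 2.
Proof.
rewrite !enorm_sq.
rewrite (_ : vsub (vadd _ _) c = fun i => t * vsub y c i + (1 - t) * vsub p c i); last first.
  by apply: functional_extensionality => j; rewrite /vsub /vadd /vscale; ring.
rewrite (_ : vsub y p = fun i => 1 * vsub y c i + (-1) * vsub p c i); last first.
  by apply: functional_extensionality => j; rewrite /vsub; ring.
rewrite !einner_comb; ring.
Qed.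

Lemma enorm_le_l1 n (u : vec n) : enorm u <= \big[Rplus/0]_(i < n) Rabs (u i).
Proof.
set S := \big[Rplus/0]_(i < n) Rabs (u i).
have S0 : 0 <= S by apply: sum_ge0 => i _; exact: Rabs_pos.
rewrite -(sqrt_pow2 S) //; apply: sqrt_le_1_alt.
have -> : S ^ 2 = \big[Rplus/0]_(i < n) (S * Rabs (u i)) by rewrite sum_scale /S; ring.
apply: sum_le => i.
have -> : u i * u i = Rabs (u i) * Rabs (u i) by rewrite -Rabs_mult Rabs_pos_eq //; nra.
apply: Rmult_le_compat_r; first exact: Rabs_pos.
exact: (@sum_term _ (fun j => Rabs (u j)) i (fun j => Rabs_pos (u j))).
Qed.

Lemma mapply_bounded m n (A : mat m n) :
  exists C, 0 <= C /\ forall v i, Rabs (mapply A v i) <= C * enorm v.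
Proof.
pose C := \big[Rplus/0]_(i < m) \big[Rplus/0]_(j < n) Rabs (A i j).
have row_le : forall i, \big[Rplus/0]_(j < n) Rabs (A i j) <= C.
  move=> i; apply: (@sum_term _ (fun i => \big[Rplus/0]_(j < n) Rabs (A i j))) => k.
  by apply: sum_ge0 => j _; exact: Rabs_pos.
exists C; split; first by apply: sum_ge0 => i _; apply: sum_ge0 => j _; exact: Rabs_pos.
move=> v i; apply: Rle_trans (sum_abs _) _.
apply: (@Rle_trans _ (\big[Rplus/0]_(j < n) (enorm v * Rabs (A i j)))).
  apply: sum_le => j; rewrite Rabs_mult Rmult_comm.
  by apply: Rmult_le_compat_r; [exact: Rabs_pos | exact: coord_le].
rewrite sum_scale Rmult_comm; apply: Rmult_le_compat_r; [exact: enorm_ge0 | exact: row_le].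
Qed.

Lemma Rabs_le_inv a b : Rabs a <= b -> - b <= a <= b.
Proof. by move=> H; have := Rle_abs a; have := Rle_abs (- a); rewrite Rabs_Ropp; lra. Qed.

Lemma le_0_of_small a c : 0 <= c -> (forall t, 0 < t <= 1 -> a <= c * t) -> a <= 0.
Proof.
move=> c0 small; apply: Rle_plus_epsilon => eta eta0; rewrite Rplus_0_l.
pose t := Rmin 1 (eta / (c + 1)).
have t0 : 0 < t by apply: Rmin_glb_lt; [lra | apply: Rdiv_lt_0_compat; lra].
have t_eta : t * (c + 1) <= eta.
  have -> : eta = eta / (c + 1) * (c + 1) by field; lra.
  by apply: Rmult_le_compat_r; [lra | exact: Rmin_r].
have := small t (conj t0 (Rmin_l _ _)); nra.
Qed.

Lemma edist_spec n (S : vec n -> Prop) x : enonempty S -> is_glb_dist S x (edist S x).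
Proof.
move=> [y0 Sy0]; apply: epsilon_spec.
pose E := fun d => forall y, S y -> d <= enorm (vsub x y).
have Eb : bound E by exists (enorm (vsub x y0)) => d Ed; exact: Ed _ Sy0.
have Ene : exists d, E d by exists 0 => y _; exact: enorm_ge0.
have [l [l_ub l_lub]] := @completeness E Eb Ene.
by exists l; split=> [y Sy | d Ed]; [apply: l_lub => d Ed; exact: Ed | exact: l_ub].
Qed.

Lemma edist_ge0 n (S : vec n -> Prop) x : enonempty S -> 0 <= edist S x.
Proof. by move=> NE; apply: (proj2 (edist_spec x NE)) => y _; exact: enorm_ge0. Qed.

Lemma edist_approx n (S : vec n -> Prop) x eta : enonempty S -> 0 < eta ->
  exists y, S y /\ enorm (vsub x y) < edist S x + eta.
Proof.
move=> NE eta0; apply: NNPP => none.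
suff : edist S x + eta <= edist S x by lra.
apply: (proj2 (edist_spec x NE)) => y Sy; apply: Rnot_lt_le => close.
by apply: none; exists y.
Qed.

Lemma le_mul_edist n (S : vec n -> Prop) x a C : enonempty S -> 0 <= C ->
  (forall p, S p -> a <= C * enorm (vsub x p)) -> a <= C * edist S x.
Proof.
move=> NE C0 bound; apply: Rle_plus_epsilon => eta eta0.
have eta'0 : 0 < eta / (C + 1) by apply: Rdiv_lt_0_compat; lra.
have [p [Sp close]] := edist_approx x NE eta'0.
have Ceta : C * (eta / (C + 1)) <= eta.
  have -> : C * (eta / (C + 1)) = eta - eta / (C + 1) by field; lra.
  lra.
have := bound p Sp.
have : C * enorm (vsub x p) <= C * (edist S x + eta / (C + 1)).
  by apply: Rmult_le_compat_l; lra.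
lra.
Qed.

Lemma le_mul_edist_sq n (S : vec n -> Prop) x a C : enonempty S -> 0 <= C ->
  (forall p, S p -> a <= C * enorm (vsub x p) ^ 2) -> a <= C * edist S x ^ 2.
Proof.
move=> NE C0 bound.
have d0 := edist_ge0 x NE.
case: (Rle_lt_dec a 0) => [a0 | a0]; first by nra.
suff : sqrt a <= sqrt C * edist S x.
  move=> H.
  have -> : a = sqrt a ^ 2 by rewrite pow2_sqrt //; lra.
  have -> : C = sqrt C ^ 2 by rewrite pow2_sqrt.
  have := sqrt_pos a; nra.
apply: le_mul_edist => // [|p Sp]; first exact: sqrt_pos.
rewrite -(sqrt_pow2 (enorm (vsub x p))); last exact: enorm_ge0.
rewrite -sqrt_mult //; last exact: pow2_ge_0.
exact/sqrt_le_1_alt/bound.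
Qed.

Lemma eball_limit n (z x : vec n) r :
  (forall eta, 0 < eta -> exists y, eball z r y /\ enorm (vsub y x) < eta) -> eball z r x.
Proof.
move=> approx; apply: Rle_plus_epsilon => eta eta0.
have [y [zy yx]] := approx eta eta0.
have := enorm_tri x y z; rewrite /eball in zy; rewrite enorm_sym in yx; lra.
Qed.

Lemma coords_eventually n (u : 'I_n -> nat -> R) (l : vec n) :
  (forall i, Un_cv (u i) (l i)) ->
  forall eta, 0 < eta -> exists N, forall k, (N <= k)%nat -> forall i, Rabs (u i k - l i) < eta.
Proof.
move=> cv eta eta0.
pose P i N := forall k, (k >= N)%coq_nat -> R_dist (u i k) (l i) < eta.
pose N i := epsilon (inhabits 0%nat) (P i).
have PN : forall i, P i (N i) by move=> i; apply: epsilon_spec; exact: cv.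
exists (\max_(i < n) N i) => k Nk i; apply: (PN i); apply/leP.
apply: leq_trans Nk; exact: (leq_bigmax_cond (P:=xpredT)).
Qed.

Lemma cauchy_limit n (x : nat -> vec n) (B : nat -> R) :
  (forall k l, enorm (vsub (x (k + l)%nat) (x k)) <= B k) ->
  (forall eta, 0 < eta -> exists N, forall k, (N <= k)%nat -> B k < eta) ->
  exists xinf,
    (forall eta, 0 < eta -> exists N, forall k, (N <= k)%nat -> enorm (vsub (x k) xinf) < eta) /\
    (forall k, enorm (vsub (x k) xinf) <= B k).
Proof.
move=> displ small.
have cauchy : forall i, Cauchy_crit (fun k => x k i).
  move=> i eta eta0; have [N BN] := small eta eta0.
  exists N => p q /leP Np /leP Nq; rewrite /R_dist.
  wlog pq : p q Np Nq / (p <= q)%nat.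
    by move=> gen; case: (leqP p q) => [|/ltnW] pq; [|rewrite Rabs_minus_sym]; apply: gen.
  rewrite Rabs_minus_sym -(subnKC pq); apply: Rle_lt_trans (BN p Np).
  apply: Rle_trans (displ p (q - p)%nat); exact: coord_le (vsub _ _) i.
pose xinf : vec n := fun i => proj1_sig (R_complete _ (cauchy i)).
have conv : forall eta, 0 < eta ->
    exists N, forall k, (N <= k)%nat -> enorm (vsub (x k) xinf) < eta.
  move=> eta eta0.
  have n1 : 0 < INR n + 1 by have := pos_INR n; lra.
  have cv : forall i, Un_cv (fun k => x k i) (xinf i).
    by move=> i; exact: proj2_sig (R_complete _ (cauchy i)).
  have eta'0 : 0 < eta / (INR n + 1) by exact: Rdiv_lt_0_compat.
  have [N close] := @coords_eventually n (fun i k => x k i) xinf cv _ eta'0.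
  exists N => k Nk; apply: Rle_lt_trans (enorm_le_l1 _) _.
  apply: Rle_lt_trans (sum_le (fun i => Rlt_le _ _ (close k Nk i))) _.
  rewrite sum_const.
  have -> : INR n * (eta / (INR n + 1)) = eta - eta / (INR n + 1) by field; lra.
  lra.
exists xinf; split=> // k; apply: Rle_plus_epsilon => eta eta0.
have [N close] := conv eta eta0.
have := enorm_tri (x k) (x (k + N)%nat) xinf.
have := close (k + N)%nat (leq_addl _ _); have := displ k N.
rewrite enorm_sym; lra.
Qed.

Lemma mapply_comb m n (A : mat m n) t (a b : vec n) i :
  mapply A (fun j => t * a j + (1 - t) * b j) i = t * mapply A a i + (1 - t) * mapply A b i.
Proof. by rewrite /mapply -!sum_scale -sum_add; apply: eq_bigr => j _; ring. Qed.

Lemma emodel_self n m (h : vec m -> R) (F : vec n -> vec m) J z : emodel h F J z z = h (F z).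
Proof.
rewrite /emodel; f_equal; apply: functional_extensionality => i.
rewrite /vadd /mapply big1 ?Rplus_0_r // => j _.
by rewrite /vsub Rminus_diag Rmult_0_r.
Qed.

Lemma emodel_convex n m (h : vec m -> R) (F : vec n -> vec m) J c y z t :
  econvex_fun h -> 0 <= t <= 1 ->
  emodel h F J c (vadd (vscale t y) (vscale (1 - t) z)) <=
  t * emodel h F J c y + (1 - t) * emodel h F J c z.
Proof.
move=> h_cvx t01; rewrite /emodel.
rewrite (_ : vsub (vadd _ _) c = fun j => t * vsub y c j + (1 - t) * vsub z c j); last first.
  by apply: functional_extensionality => j; rewrite /vsub /vadd /vscale; ring.
rewrite (_ : vadd (F c) _ = vadd (vscale t (vadd (F c) (mapply (J c) (vsub y c))))
                              (vscale (1 - t) (vadd (F c) (mapply (J c) (vsub z c))))).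
  exact: h_cvx.
by apply: functional_extensionality => i; rewrite /vadd /vscale mapply_comb; ring.
Qed.

(* Three-point inequality: the prox-linear subproblem is (beta)-strongly convex,
   so its minimizer xp over the convex set X satisfies, for every y in X,
   Phi(xp) + beta/2 |y - xp|^2 <= Phi(y), where Phi is the subproblem objective. *)
Lemma three_point n m X (h : vec m -> R) (F : vec n -> vec m) J c xp beta :
  econvex_set X -> econvex_fun h -> 0 < beta ->
  eargmin (fun y => emodel h F J c y + beta / 2 * enorm (vsub y c) ^ 2) X xp ->
  forall y, X y ->
  emodel h F J c xp + beta / 2 * enorm (vsub xp c) ^ 2 + beta / 2 * enorm (vsub y xp) ^ 2
  <= emodel h F J c y + beta / 2 * enorm (vsub y c) ^ 2.
Proof.
move=> X_cvx h_cvx beta0 [Xp xp_min] y Xy.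
set N := enorm (vsub y xp) ^ 2.
have N0 : 0 <= N by exact: pow2_ge_0.
(* compare xp with the points t y + (1 - t) xp of the segment [xp, y] *)
have segment : forall t, 0 < t <= 1 ->
    emodel h F J c xp + beta / 2 * enorm (vsub xp c) ^ 2 <=
    t * emodel h F J c y + (1 - t) * emodel h F J c xp +
    beta / 2 * (t * enorm (vsub y c) ^ 2 + (1 - t) * enorm (vsub xp c) ^ 2 - t * (1 - t) * N).
  move=> t t01; have t01' : 0 <= t <= 1 by lra.
  have := xp_min _ (X_cvx y xp t Xy Xp t01'); cbv beta; rewrite enorm_sq_comb -/N.
  have := emodel_convex F J c y xp h_cvx t01'; lra.
suff : emodel h F J c xp + beta / 2 * enorm (vsub xp c) ^ 2 + beta / 2 * N
       - (emodel h F J c y + beta / 2 * enorm (vsub y c) ^ 2) <= 0 by lra.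
apply: (le_0_of_small (c := beta / 2 * N)); first nra.
move=> t t01; apply: (Rmult_le_reg_l t); first lra.
have := segment t t01; nra.
Qed.

Lemma jensen m (h : vec m -> R) k (a : 'I_k.+1 -> vec m) : econvex_fun h ->
  h (fun i => / INR k.+1 * \big[Rplus/0]_(j < k.+1) a j i) <=
  / INR k.+1 * \big[Rplus/0]_(j < k.+1) h (a j).
Proof.
move=> h_cvx; elim: k a => [|k IH] a.
  rewrite !big_ord1 (_ : (fun i => _) = a ord0); first by rewrite /= Rinv_1; lra.
  by apply: functional_extensionality => i; rewrite big_ord1 /= Rinv_1; ring.
have k1 : 0 < INR k.+1 by apply: lt_0_INR; apply/ltP.
have k2 : INR k.+2 = INR k.+1 + 1 by rewrite S_INR.
set t := INR k.+1 / INR k.+2.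
have t0 : 0 < t by apply: Rdiv_lt_0_compat; lra.
have Et : t * (INR k.+1 + 1) = INR k.+1 by rewrite /t k2; field; lra.
have t01 : 0 <= t <= 1 by nra.
pose a' j := a (widen_ord (leqnSn k.+1) j).
rewrite (_ : (fun i => _) = vadd (vscale t (fun i => / INR k.+1 * \big[Rplus/0]_(j < k.+1) a' j i))
                               (vscale (1 - t) (a ord_max))); last first.
  apply: functional_extensionality => i.
  by rewrite sum_recr /vadd /vscale /t /a' k2; field; lra.
apply: Rle_trans (h_cvx _ _ _ t01) _.
have E1 : t * / INR k.+1 = / INR k.+2 by rewrite /t k2; field; lra.
have E2 : 1 - t = / INR k.+2 by rewrite /t k2; field; lra.
rewrite (sum_recr (fun j => h (a j))) E2.
have := Rmult_le_compat_l t _ _ (proj1 t01) (IH a').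
rewrite -Rmult_assoc E1 /a'; lra.
Qed.

Lemma convex_bounded_above m (h : vec m -> R) q : econvex_fun h ->
  exists M, forall w : vec m, (forall i, Rabs (w i) <= 1) -> h (vadd q w) <= M.
Proof.
move=> h_cvx; case: m h q h_cvx => [|m'] h q h_cvx.
  exists (h q) => w _.
  have -> : vadd q w = q by apply: functional_extensionality => -[].
  exact: Rle_refl.
set m := m'.+1.
have m0 : 0 < INR m by apply: lt_0_INR; apply/ltP.
(* q + w is the average of the points q + m w_j e_j, each on the segment
   joining the "vertices" q +- m e_j *)
pose e (j : 'I_m) : vec m := fun i => if i == j then 1 else 0.
pose P j := vadd q (vscale (INR m) (e j)).
pose Q j := vadd q (vscale (- INR m) (e j)).
exists (/ INR m * \big[Rplus/0]_(j < m) (Rabs (h (P j)) + Rabs (h (Q j)))) => w w1.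
pose a j : vec m := fun i => q i + (if i == j then INR m * w j else 0).
rewrite (_ : vadd q w = fun i => / INR m * \big[Rplus/0]_(j < m) a j i); last first.
  apply: functional_extensionality => i.
  by rewrite /a sum_add sum_const sum_delta /vadd; field; lra.
apply: Rle_trans (@jensen _ h m' a h_cvx) _; apply: Rmult_le_compat_l.
  by apply: Rlt_le; exact: Rinv_0_lt_compat.
apply: sum_le => j.
have [w_lo w_hi] := Rabs_le_inv (w1 j).
pose s := (w j + 1) / 2.
have s01 : 0 <= s <= 1 by rewrite /s; lra.
rewrite (_ : a j = vadd (vscale s (P j)) (vscale (1 - s) (Q j))); last first.
  apply: functional_extensionality => i; rewrite /a /P /Q /vadd /vscale /e /s.
  by case: eqP => [->|_]; field.
apply: Rle_trans (h_cvx _ _ _ s01) _.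
have := Rle_abs (h (P j)); have := Rle_abs (h (Q j)).
have := Rabs_pos (h (P j)); have := Rabs_pos (h (Q j)); nra.
Qed.

(* Convex functions on R^m are upper semicontinuous: h q <= h (q + w) + eta for
   all sufficiently small perturbations w.  (Local boundedness from above gives
   both h q <= lam M + (1 - lam) h (q + w) and a lower bound on h (q + w).) *)
Lemma convex_usc m (h : vec m -> R) q eta : econvex_fun h -> 0 < eta ->
  exists delta, 0 < delta /\
    forall w : vec m, (forall i, Rabs (w i) <= delta) -> h q <= h (vadd q w) + eta.
Proof.
move=> h_cvx eta0; have [M HM] := convex_bounded_above q h_cvx.
set K := Rabs (M - h q) + 1.
have K1 : 1 <= K by have := Rabs_pos (M - h q); rewrite /K; lra.
pose lam := Rmin (/ 2) (eta / (2 * K)).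
have lam0 : 0 < lam by apply: Rmin_glb_lt; [lra | apply: Rdiv_lt_0_compat; lra].
have lam_half : lam <= / 2 by exact: Rmin_l.
have lam_K : 2 * lam * K <= eta.
  have -> : eta = eta / (2 * K) * (2 * K) by field; lra.
  have := Rmin_r (/ 2) (eta / (2 * K)); rewrite -/lam; nra.
exists lam; split=> // w w_small.
set hw := h (vadd q w).
(* q is the lam-combination of q + w' and q + w, with w' = -(1 - lam)/lam w *)
pose w' : vec m := fun i => - ((1 - lam) / lam) * w i.
have w'_box : forall i, Rabs (w' i) <= 1.
  move=> i; rewrite /w' Rabs_mult Rabs_Ropp Rabs_pos_eq; last first.
    by apply: Rlt_le; apply: Rdiv_lt_0_compat; lra.
  have E : (1 - lam) / lam * lam = 1 - lam by field; lra.
  have : 0 < (1 - lam) / lam by apply: Rdiv_lt_0_compat; lra.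
  have := w_small i; nra.
have upper : h q <= lam * M + (1 - lam) * hw.
  rewrite {1}(_ : q = vadd (vscale lam (vadd q w')) (vscale (1 - lam) (vadd q w))); last first.
    by apply: functional_extensionality => i; rewrite /vadd /vscale /w'; field; lra.
  apply: Rle_trans (h_cvx _ _ _ _) _; first lra.
  rewrite -/hw; have := HM _ w'_box; nra.
(* q is the midpoint of q + w and q - w *)
have lower : h q <= / 2 * hw + / 2 * M.
  have w_box : forall i, Rabs (- w i) <= 1.
    by move=> i; rewrite Rabs_Ropp; have := w_small i; lra.
  rewrite {1}(_ : q = vadd (vscale (/ 2) (vadd q w)) (vscale (1 - / 2) (vadd q (fun i => - w i)))).
    apply: Rle_trans (h_cvx _ _ _ _) _; first lra.
    rewrite -/hw; have := HM _ w_box; lra.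
  by apply: functional_extensionality => i; rewrite /vadd /vscale; field.
have L1 : lam * (M - hw) <= lam * (2 * (M - h q)) by apply: Rmult_le_compat_l; lra.
have L2 : lam * (M - h q) <= lam * K.
  by apply: Rmult_le_compat_l; [lra | have := Rle_abs (M - h q); rewrite /K; lra].
lra.
Qed.

Section ProxStep.

Variables (n m : nat) (X : vec n -> Prop) (h : vec m -> R) (F : vec n -> vec m)
  (J : vec n -> mat m n) (xbar xk xp : vec n) (rho beta : R).

Local Notation Xstar := (eargmin (fun y => h (F y)) X).

Hypothesis X_convex : econvex_set X.
Hypothesis h_convex : econvex_fun h.
Hypothesis beta_pos : 0 < beta.
Hypothesis rho_le_beta : rho <= beta.
Hypothesis xbar_min : Xstar xbar.
Hypothesis xk_in_X : X xk.
Hypothesis model_error : forall y, X y ->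
  Rabs (h (F y) - emodel h F J xk y) <= rho / 2 * enorm (vsub y xk) ^ 2.
Hypothesis xp_prox :
  eargmin (fun y => emodel h F J xk y + beta / 2 * enorm (vsub y xk) ^ 2) X xp.

Let xp_in_X : X xp. Proof. by case: xp_prox. Qed.
Let fstar_le y : X y -> h (F xbar) <= h (F y). Proof. by case: xbar_min => _; apply. Qed.
Let xp_model : h (F xp) <= emodel h F J xk xp + rho / 2 * enorm (vsub xp xk) ^ 2.
Proof. by have [_ ?] := Rabs_le_inv (model_error xp_in_X); lra. Qed.

Lemma prox_descent : beta / 2 * enorm (vsub xp xk) ^ 2 <= h (F xk) - h (F xbar).
Proof.
have := three_point X_convex h_convex beta_pos xp_prox xk_in_X.
rewrite emodel_self enorm_self (enorm_sym xk xp).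
have := fstar_le xp_in_X; have := pow2_ge_0 (enorm (vsub xp xk)); nra.
Qed.

Lemma prox_vs_minimizer p : Xstar p ->
  h (F xp) - h (F xbar) + beta / 2 * enorm (vsub p xp) ^ 2 <= beta * enorm (vsub xk p) ^ 2.
Proof.
move=> [Xp p_min].
have fp : h (F p) = h (F xbar) by have := p_min _ (proj1 xbar_min); have := fstar_le Xp; lra.
have [model_lo _] := Rabs_le_inv (model_error Xp).
rewrite fp (enorm_sym p xk) in model_lo.
have := three_point X_convex h_convex beta_pos xp_prox Xp; rewrite (enorm_sym p xk).
have : 0 <= (beta - rho) * enorm (vsub xp xk) ^ 2 by apply: Rmult_le_pos; [lra | exact: pow2_ge_0].
have : 0 <= (beta - rho) * enorm (vsub xk p) ^ 2 by apply: Rmult_le_pos; [lra | exact: pow2_ge_0].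
have := xp_model; lra.
Qed.

Lemma prox_gap : h (F xp) - h (F xbar) <= beta * edist Xstar xk ^ 2.
Proof.
apply: le_mul_edist_sq; [by exists xbar | lra | move=> p Sp].
have := prox_vs_minimizer Sp; have := pow2_ge_0 (enorm (vsub p xp)); nra.
Qed.

Lemma prox_step_length : enorm (vsub xp xk) <= (1 + sqrt 2) * edist Xstar xk.
Proof.
apply: le_mul_edist; [by exists xbar | have := sqrt_pos 2; lra | move=> p Sp].
have gap0 : 0 <= h (F xp) - h (F xbar) by have := fstar_le xp_in_X; lra.
have r2 : sqrt 2 ^ 2 = 2 by rewrite pow2_sqrt //; lra.
(* |p - xp|^2 <= 2 |xk - p|^2, hence |p - xp| <= sqrt 2 |xk - p| *)
have far : enorm (vsub p xp) <= sqrt 2 * enorm (vsub xk p).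
  apply: Rsqr_incr_0_var; last by have := sqrt_pos 2; have := enorm_ge0 (vsub xk p); nra.
  rewrite !Rsqr_pow2 Rpow_mult_distr r2.
  have := prox_vs_minimizer Sp; nra.
have := enorm_tri xp p xk; rewrite (enorm_sym xp p) (enorm_sym p xk); lra.
Qed.

End ProxStep.

Lemma sum_nat_recr l (s : nat -> R) :
  \big[Rplus/0]_(i < l.+1) s i = \big[Rplus/0]_(i < l) s i + s l.
Proof. by rewrite sum_recr. Qed.

Lemma sum_le_recr l (s : nat -> R) :
  0 <= s l -> \big[Rplus/0]_(i < l) s i <= \big[Rplus/0]_(i < l.+1) s i.
Proof. by rewrite sum_nat_recr; lra. Qed.

Lemma chain n (x : nat -> vec n) k l :
  enorm (vsub (x (k + l)%nat) (x k)) <=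
  \big[Rplus/0]_(j < l) enorm (vsub (x (k + j).+1) (x (k + j)%nat)).
Proof.
elim: l => [|l IH]; first by rewrite big_ord0 addn0 enorm_self; lra.
rewrite (sum_nat_recr l (fun j => enorm (vsub (x (k + j).+1) (x (k + j)%nat)))) addnS.
have := enorm_tri (x (k + l).+1) (x (k + l)%nat) (x k); lra.
Qed.

(* [tail_factor e] dominates sum_{j >= 0} e^(2^j - 1) for 0 <= e <= 1/2; it is
   the weight of a potential that makes quadratically convergent sums telescope *)
Definition tail_factor (e : R) : R := 1 + e + e ^ 3 + 2 * e ^ 7.

Lemma tail_factor_mono a b : 0 <= a <= b -> tail_factor a <= tail_factor b.
Proof.
move=> ab; rewrite /tail_factor.
have := pow_incr a b 3 ab; have := pow_incr a b 7 ab; lra.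
Qed.

Lemma tail_factor_ge1 e : 0 <= e -> 1 <= tail_factor e.
Proof. by move=> e0; rewrite /tail_factor; have := pow_le e 3 e0; have := pow_le e 7 e0; lra. Qed.

Lemma tail_factor_step e : 0 <= e <= / 2 -> e * tail_factor (e ^ 2) <= tail_factor e - 1.
Proof.
move=> [e0 e_half]; rewrite /tail_factor.
have -> : e * (1 + e ^ 2 + (e ^ 2) ^ 3 + 2 * (e ^ 2) ^ 7) =
          e + e ^ 3 + e ^ 7 + 2 * (e ^ 7 * e ^ 8) by ring.
have e8 : e ^ 8 <= (/ 2) ^ 8 by apply: pow_incr; lra.
have := pow_le e 7 e0 => e7.
have : e ^ 7 * e ^ 8 <= e ^ 7 * (/ 2) ^ 8 by apply: Rmult_le_compat_l.
lra.
Qed.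

(* The invariant is that  sum_(i < j) s_i + r D_j tail_factor(c D_j)  decreases. *)
Lemma potential_sum (s D : nat -> R) c r l :
  0 < c -> 0 <= r -> (forall j, 0 <= D j) -> c * D 0%nat <= / 2 ->
  (forall i, (i < l)%nat -> D i.+1 <= c * D i ^ 2) ->
  (forall i, (i <= l)%nat -> s i <= r * D i) ->
  \big[Rplus/0]_(i < l.+1) s i <= r * D 0%nat * tail_factor (c * D 0%nat).
Proof.
move=> c0 r0 D0 start rec step.
have cD0 : forall j, 0 <= c * D j by move=> j; have := D0 j; nra.
have inv : forall j, (j <= l)%nat ->
    \big[Rplus/0]_(i < j) s i + r * D j * tail_factor (c * D j) <=
    r * D 0%nat * tail_factor (c * D 0%nat) /\ c * D j <= / 2.
  elim=> [|j IH] jl; first by rewrite big_ord0; lra.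
  have [IH1 IH2] := IH (ltnW jl).
  set e := c * D j in IH1 IH2.
  have next : c * D j.+1 <= e ^ 2.
    have := Rmult_le_compat_l c _ _ (Rlt_le _ _ c0) (rec j jl); rewrite /e; nra.
  have tf_next : D j.+1 * tail_factor (c * D j.+1) <= D j * (tail_factor e - 1).
    apply: (@Rle_trans _ (e * D j * tail_factor (e ^ 2))).
      apply: Rmult_le_compat; [exact: D0 | have := tail_factor_ge1 (cD0 j.+1); lra | |].
        by have := rec j jl; rewrite /e; nra.
      by apply: tail_factor_mono; split; [exact: cD0 | exact: next].
    have := tail_factor_step (conj (cD0 j) IH2); rewrite -/e => H.
    by rewrite (Rmult_comm e) Rmult_assoc; apply: Rmult_le_compat_l.
  split; last by have := cD0 j; rewrite -/e in next *; nra.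
  rewrite sum_nat_recr; set acc := \big[Rplus/0]_(i < j) s i in IH1 *.
  have := step j (ltnW jl); have := Rmult_le_compat_l r _ _ r0 tf_next; lra.
have [inv_l _] := inv l (leqnn l).
have weight : r * D l <= r * D l * tail_factor (c * D l).
  rewrite -{1}(Rmult_1_r (r * D l)); apply: Rmult_le_compat_l; last exact: tail_factor_ge1.
  by have := D0 l; nra.
rewrite sum_nat_recr; set acc := \big[Rplus/0]_(i < l) s i in inv_l *.
have := step l (leqnn l); lra.
Qed.

Definition rate (k : nat) : R := Rpower (/ 2) (Rpower 2 (INR k - 1)).

Lemma rate_pos k : 0 < rate k.
Proof. exact: exp_pos. Qed.

Lemma rate_sq k : rate k ^ 2 = rate k.+1.
Proof.
rewrite -(@Rpower_pow 2 _ (rate_pos k)) /rate Rpower_mult.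
have -> : INR 2 = Rpower 2 1 by rewrite Rpower_1 /=; lra.
by rewrite -Rpower_plus S_INR; congr Rpower; congr Rpower; ring.
Qed.

Lemma rate0_sq : rate 0 ^ 2 = / 2.
Proof.
rewrite rate_sq /rate /= Rminus_diag Rpower_O ?Rpower_1 //; lra.
Qed.

Lemma rate_le k : sqrt 2 * rate k <= 1.
Proof.
have r2 : sqrt 2 ^ 2 = 2 by rewrite pow2_sqrt //; lra.
have r2_ge1 : 1 <= sqrt 2 by rewrite -sqrt_1; apply: sqrt_le_1_alt; lra.
elim: k => [|k IH].
  have := rate_pos 0; have := rate0_sq; have := sqrt_pos 2; nra.
rewrite -rate_sq; have := rate_pos k; nra.
Qed.

Lemma sqrt2_bounds : 1.41421 <= sqrt 2 <= 1.41422.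
Proof. have := pow2_sqrt 2; have := sqrt_pos 2; split; nra. Qed.

(* numerical budget for keeping the iterates in B_eps(xbar):
   eps/2 (start) + sqrt2/5 eps (first step) + (2+sqrt2)/20 tail_factor(1/4) eps (the rest) *)
Lemma ball_budget : / 2 + sqrt 2 / 5 + (2 + sqrt 2) / 20 * tail_factor (/ 4) <= 1.
Proof. by have := sqrt2_bounds; rewrite /tail_factor /=; lra. Qed.

(* numerical budget for the path length after x_k: at most 4 D_k *)
Lemma tail_budget : (1 + sqrt 2) * tail_factor (/ 2) <= 4.
Proof. by have := sqrt2_bounds; rewrite /tail_factor /=; lra. Qed.

Section ProxLinearIterates.

Variables (n m : nat) (X : vec n -> Prop) (h : vec m -> R) (F : vec n -> vec m)
  (J : vec n -> mat m n) (xbar : vec n) (eps mu rho beta : R) (x : nat -> vec n).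

Local Notation Xstar := (eargmin (fun y => h (F y)) X).
Local Notation gap k := (h (F (x k)) - h (F xbar)).
Local Notation distX k := (edist Xstar (x k)).
Local Notation step k := (enorm (vsub (x k.+1) (x k))).
Local Notation kappa := (beta / mu).

Hypothesis X_closed : eclosed_set X.
Hypothesis X_convex : econvex_set X.
Hypothesis h_convex : econvex_fun h.
Hypothesis xbar_min : Xstar xbar.
Hypothesis mu_pos : 0 < mu.
Hypothesis rho_pos : 0 < rho.
Hypothesis rho_le_beta : rho <= beta.
Hypothesis approx : forall z y, X z -> eball xbar eps z -> X y ->
  Rabs (h (F y) - emodel h F J z y) <= rho / 2 * enorm (vsub y z) ^ 2.
Hypothesis sharp : forall z, X z -> eball xbar eps z ->
  h (F z) - h (F xbar) >= mu * edist Xstar z.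
Hypothesis x0_in_X : X (x 0%nat).
Hypothesis x0_near : eball xbar (eps / 2) (x 0%nat).
Hypothesis x0_gap : gap 0%nat <= Rmin (beta * eps ^ 2 / 25) (mu ^ 2 / (2 * beta)).
Hypothesis prox_step : forall k,
  eargmin (fun y => emodel h F J (x k) y + beta / 2 * enorm (vsub y (x k)) ^ 2) X (x k.+1).

Let beta_pos : 0 < beta. Proof. lra. Qed.
Let kappa_pos : 0 < kappa. Proof. exact: Rdiv_lt_0_compat. Qed.
Let Xstar_nonempty : enonempty Xstar. Proof. by exists xbar. Qed.
Let fstar_le y : X y -> h (F xbar) <= h (F y). Proof. by case: xbar_min => _; apply. Qed.

Lemma iterate_in_X k : X (x k).
Proof. by case: k => [|k] //; case: (prox_step k). Qed.

Lemma gap_ge0 k : 0 <= gap k.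
Proof. by have := fstar_le (iterate_in_X k); lra. Qed.

Lemma dist_ge0 k : 0 <= distX k.
Proof. exact: edist_ge0 _ Xstar_nonempty. Qed.

Lemma step_bounds k : eball xbar eps (x k) ->
  beta / 2 * step k ^ 2 <= gap k /\ gap k.+1 <= beta * distX k ^ 2 /\
  step k <= (1 + sqrt 2) * distX k.
Proof.
move=> Bk.
have err : forall y, X y ->
    Rabs (h (F y) - emodel h F J (x k) y) <= rho / 2 * enorm (vsub y (x k)) ^ 2.
  by move=> y Xy; apply: approx => //; exact: iterate_in_X.
split; first exact: prox_descent X_convex h_convex beta_pos rho_le_beta xbar_min
  (iterate_in_X k) err (prox_step k).
split; first exact: prox_gap X_convex h_convex beta_pos rho_le_beta xbar_min err (prox_step k).
exact: prox_step_length X_convex h_convex beta_pos rho_le_beta xbar_min err (prox_step k).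
Qed.

Lemma sharp_dist k : eball xbar eps (x k) -> mu * distX k <= gap k.
Proof. by move=> Bk; have := sharp (iterate_in_X k) Bk; lra. Qed.

Lemma dist_recursion k : eball xbar eps (x k) -> eball xbar eps (x k.+1) ->
  distX k.+1 <= kappa * distX k ^ 2.
Proof.
move=> Bk Bk1; have [_ [gap1 _]] := step_bounds Bk; have := sharp_dist Bk1.
move=> sharp1; apply: (Rmult_le_reg_l mu) => //.
have -> : mu * (kappa * distX k ^ 2) = beta * distX k ^ 2 by field; lra.
lra.
Qed.

Let eps_ge0 : 0 <= eps.
Proof. by have := enorm_ge0 (vsub (x 0%nat) xbar); move: x0_near; rewrite /eball; lra. Qed.

Let x0_ball : eball xbar eps (x 0%nat).
Proof. by move: x0_near; rewrite /eball; lra. Qed.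

Lemma initial_bounds :
  step 0 <= sqrt 2 / 5 * eps /\ distX 0%nat <= eps / (5 * sqrt 2) /\ kappa * distX 0%nat <= / 2.
Proof.
have [descent0 _] := step_bounds x0_ball; have sharp0 := sharp_dist x0_ball.
have gap_eps := Rle_trans _ _ _ x0_gap (Rmin_l _ _).
have gap_mu := Rle_trans _ _ _ x0_gap (Rmin_r _ _).
have [r2lo r2hi] := sqrt2_bounds; have r2 : sqrt 2 ^ 2 = 2 by rewrite pow2_sqrt //; lra.
have D0 := dist_ge0 0; have g0 := gap_ge0 0.
split.
  apply: Rsqr_incr_0_var; last by nra.
  rewrite !Rsqr_pow2 (_ : (sqrt 2 / 5 * eps) ^ 2 = sqrt 2 ^ 2 * eps ^ 2 / 25); last by field.
  rewrite r2; apply: (Rmult_le_reg_l (beta / 2)); first lra.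
  have -> : beta / 2 * (2 * eps ^ 2 / 25) = beta * eps ^ 2 / 25 by field.
  lra.
split.
  apply: Rsqr_incr_0_var.
    rewrite !Rsqr_pow2 (_ : (eps / (5 * sqrt 2)) ^ 2 = eps ^ 2 / (25 * sqrt 2 ^ 2)).
      rewrite r2; apply: (Rmult_le_reg_l (mu ^ 2)); first nra.
      (* (mu D0)^2 <= gap0^2 <= (beta eps^2 / 25) (mu^2 / (2 beta)) = mu^2 eps^2 / 50 *)
      have -> : mu ^ 2 * (eps ^ 2 / (25 * 2)) = beta * eps ^ 2 / 25 * (mu ^ 2 / (2 * beta)).
        by field; lra.
      have := Rmult_le_compat _ _ _ _ g0 g0 gap_eps gap_mu.
      have : 0 <= mu * distX 0%nat by nra.
      nra.
    by field; lra.
  by apply: Rmult_le_pos; [lra | apply: Rlt_le; apply: Rinv_0_lt_compat; lra].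
(* mu D0 <= gap0 <= mu^2 / (2 beta) *)
apply: (Rmult_le_reg_l mu) => //.
have -> : mu * (kappa * distX 0%nat) = beta / mu * (mu * distX 0%nat) by field; lra.
have : beta / mu * (mu * distX 0%nat) <= beta / mu * (mu ^ 2 / (2 * beta)).
  by apply: Rmult_le_compat_l; lra.
have -> : beta / mu * (mu ^ 2 / (2 * beta)) = mu * / 2 by field; lra.
lra.
Qed.

Lemma tail_from_one l : (forall j, (j <= l.+1)%nat -> eball xbar eps (x j)) ->
  enorm (vsub (x (1 + l.+1)%nat) (x 1%nat)) <= (2 + sqrt 2) / 20 * tail_factor (/ 4) * eps.
Proof.
move=> balls.
have [_ [D0_eps kD0]] := initial_bounds.
have D0 := dist_ge0 0; have D1 := dist_ge0 1.
have rec0 := dist_recursion x0_ball (balls 1%nat isT).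
have D1_half : distX 1%nat <= / 2 * distX 0%nat by nra.
have kD1 : kappa * distX 1%nat <= / 4.
  have := Rmult_le_compat_l kappa _ _ (Rlt_le _ _ kappa_pos) rec0; nra.
have kD1_0 : 0 <= kappa * distX 1%nat by nra.
have start : kappa * distX (1 + 0)%nat <= / 2 by rewrite addn0; lra.
have r0 : 0 <= 1 + sqrt 2 by have := sqrt_pos 2; lra.
have path := @potential_sum (fun j => step (1 + j)) (fun j => distX (1 + j)%nat) kappa
  (1 + sqrt 2) l kappa_pos r0 (fun j => dist_ge0 _) start.
apply: Rle_trans (chain x 1 l.+1) _; apply: Rle_trans (path _ _) _.
- by move=> i il; apply: dist_recursion; apply: balls; [exact: ltnW | rewrite ltnS].
- by move=> i il; have [_ [_ ?]] := step_bounds (balls (1 + i)%nat il).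
rewrite addn0.
have [r2lo r2hi] := sqrt2_bounds.
have -> : (2 + sqrt 2) / 20 = (1 + sqrt 2) / (10 * sqrt 2).
  have r2 : sqrt 2 * sqrt 2 = 2 by apply: sqrt_sqrt; lra.
  by field_simplify_eq; [nra | lra].
have tf : tail_factor (kappa * distX 1%nat) <= tail_factor (/ 4) by apply: tail_factor_mono; lra.
have D1_eps : distX 1%nat <= eps / (10 * sqrt 2).
  apply: Rle_trans D1_half _; apply: (Rle_trans _ (/ 2 * (eps / (5 * sqrt 2)))); first lra.
  by right; field; lra.
have := tail_factor_ge1 kD1_0.
have -> : (1 + sqrt 2) / (10 * sqrt 2) * tail_factor (/ 4) * eps =
          (1 + sqrt 2) * (eps / (10 * sqrt 2)) * tail_factor (/ 4) by field; lra.
by move=> tf1; apply: Rmult_le_compat; nra.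
Qed.

Lemma ball_extend N : (forall j, (j <= N)%nat -> eball xbar eps (x j)) ->
  eball xbar eps (x N.+1).
Proof.
move=> balls; rewrite /eball.
have [step0 _] := initial_bounds.
have tail : enorm (vsub (x N.+1) (x 1%nat)) <= (2 + sqrt 2) / 20 * tail_factor (/ 4) * eps.
  case: N balls => [|l] balls; last by rewrite -add1n; exact: tail_from_one.
  rewrite enorm_self; apply: Rmult_le_pos; last exact: eps_ge0.
  have := tail_factor_ge1 (ltac:(lra) : 0 <= / 4); have := sqrt_pos 2; nra.
have := enorm_tri (x N.+1) (x 1%nat) (x 0%nat).
have := enorm_tri (x N.+1) (x 0%nat) xbar.
have := ball_budget; have := eps_ge0; move: x0_near; rewrite /eball; nra.
Qed.

Lemma iterates_in_ball k : eball xbar eps (x k).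
Proof.
have balls : forall N j, (j <= N)%nat -> eball xbar eps (x j).
  elim=> [|N IH] j; first by rewrite leqn0 => /eqP ->.
  by rewrite leq_eqVlt ltnS => /orP [/eqP -> | /IH]; [exact: ball_extend |].
exact: (balls k k (leqnn k)).
Qed.

Lemma dist_quadratic k : distX k.+1 <= kappa * distX k ^ 2.
Proof. exact: dist_recursion (iterates_in_ball k) (iterates_in_ball k.+1). Qed.

Lemma gap_quadratic k : gap k.+1 <= beta / mu ^ 2 * gap k ^ 2.
Proof.
have [_ [gap1 _]] := step_bounds (iterates_in_ball k).
have sharp_k := sharp_dist (iterates_in_ball k).
have := dist_ge0 k; have := gap_ge0 k => g0 D0.
have -> : beta / mu ^ 2 * gap k ^ 2 = beta * (gap k / mu) ^ 2 by field; lra.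
apply: Rle_trans gap1 _; apply: Rmult_le_compat_l; first lra.
apply: pow_incr; split=> //.
apply: (Rmult_le_reg_l mu) => //.
by have -> : mu * (gap k / mu) = gap k by field; lra.
Qed.

Lemma contraction k : kappa * distX k <= rate k ^ 2.
Proof.
elim: k => [|k IH]; first by have [_ [_ ?]] := initial_bounds; rewrite rate0_sq.
have kD0 : 0 <= kappa * distX k by have := dist_ge0 k; nra.
have := Rmult_le_compat_l kappa _ _ (Rlt_le _ _ kappa_pos) (dist_quadratic k).
have -> : kappa * (kappa * distX k ^ 2) = (kappa * distX k) ^ 2 by ring.
have := pow_incr _ _ 2 (conj kD0 IH); rewrite -rate_sq; lra.
Qed.

Lemma contraction_half k : kappa * distX k <= / 2.
Proof.
have r0 : 0 <= sqrt 2 * rate k by have := rate_pos k; have := sqrt_pos 2; nra.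
have := pow_incr _ _ 2 (conj r0 (rate_le k)).
rewrite Rpow_mult_distr pow2_sqrt; last lra.
have := contraction k; rewrite pow1; lra.
Qed.

Lemma displacement k l : enorm (vsub (x (k + l)%nat) (x k)) <= 4 * distX k.
Proof.
apply: Rle_trans (chain x k l) _.
apply: Rle_trans (@sum_le_recr l (fun j => step (k + j)) (enorm_ge0 _)) _.
have kD0 : 0 <= kappa * distX k by have := dist_ge0 k; nra.
have r0 : 0 <= 1 + sqrt 2 by have := sqrt_pos 2; lra.
apply: Rle_trans (@potential_sum (fun j => step (k + j)) (fun j => distX (k + j)%nat) kappa
  (1 + sqrt 2) l kappa_pos r0 (fun j => dist_ge0 _) _ _ _) _.
- by rewrite addn0; exact: contraction_half.
- by move=> i _; rewrite addnS; exact: dist_quadratic.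
- by move=> i _; have [_ [_ ?]] := step_bounds (iterates_in_ball (k + i)%nat).
rewrite addn0.
apply: (@Rle_trans _ ((1 + sqrt 2) * distX k * tail_factor (/ 2))).
  apply: Rmult_le_compat_l; first by have := dist_ge0 k; nra.
  exact: tail_factor_mono (conj kD0 (contraction_half k)).
have := Rmult_le_compat_l (distX k) _ _ (dist_ge0 k) tail_budget; lra.
Qed.

Lemma dist_halving k : distX k <= distX 0%nat * (/ 2) ^ k.
Proof.
elim: k => [|k IH]; first by rewrite /=; lra.
have := dist_quadratic k; have := contraction_half k; have := dist_ge0 k.
rewrite /= => D0 half quad.
have : distX k.+1 <= / 2 * distX k by nra.
have := pow_le (/ 2) k (ltac:(lra)); nra.
Qed.

Lemma dist_vanishes eta : 0 < eta -> exists N, forall k, (N <= k)%nat -> distX k < eta.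
Proof.
move=> eta0; have D0 := dist_ge0 0.
have [N HN] := pow_lt_1_zero (/ 2) (ltac:(rewrite Rabs_pos_eq; lra)) (eta / (distX 0%nat + 1))
  (ltac:(apply: Rdiv_lt_0_compat; lra)).
exists N => k Nk; apply: Rle_lt_trans (dist_halving k) _.
have := HN k (ltac:(exact/leP)); rewrite Rabs_pos_eq; last by apply: pow_le; lra.
move=> small; have := pow_le (/ 2) k (ltac:(lra)).
have -> : eta = eta / (distX 0%nat + 1) * (distX 0%nat + 1) by field; lra.
nra.
Qed.

Lemma gap_vanishes eta : 0 < eta -> exists N, forall k, (N <= k)%nat -> gap k < eta.
Proof.
move=> eta0; pose tau := Rmin 1 (eta / (beta + 1)).
have tau0 : 0 < tau by apply: Rmin_glb_lt; [lra | apply: Rdiv_lt_0_compat; lra].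
have tau_eta : beta * tau < eta.
  have -> : eta = eta / (beta + 1) * (beta + 1) by field; lra.
  have := Rmin_r 1 (eta / (beta + 1)); rewrite -/tau; nra.
have [N small] := dist_vanishes tau0.
exists N.+1 => -[|k] //; rewrite ltnS => Nk.
have [_ [gap1 _]] := step_bounds (iterates_in_ball k).
have := small k Nk; have := Rmin_l 1 (eta / (beta + 1)); have := dist_ge0 k.
rewrite -/tau => D0 tau1 Dk.
have : distX k ^ 2 <= distX k by nra.
nra.
Qed.

(* any limit of the iterates is a minimizer: it lies in X (closed), and by upper
   semicontinuity of h and the model bound at the limit, f(limit) <= lim f(x_k) = f* *)
Lemma limit_minimizes xinf :
  (forall eta, 0 < eta -> exists N, forall k, (N <= k)%nat -> enorm (vsub (x k) xinf) < eta) ->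
  Xstar xinf.
Proof.
move=> conv.
have Xinf : X xinf.
  apply: X_closed => e e0; have [N HN] := conv e e0.
  by exists (x N); split; [exact: iterate_in_X | exact: HN].
have Binf : eball xbar eps xinf.
  apply: eball_limit => e e0; have [N HN] := conv e e0.
  by exists (x N); split; [exact: iterates_in_ball | exact: HN].
split=> // y Xy; apply: Rle_trans (fstar_le Xy); apply: Rle_plus_epsilon => eta eta0.
have eta3 : 0 < eta / 3 by lra.
have [C [C0 HC]] := mapply_bounded (J xinf).
have [delta [delta0 usc]] := convex_usc (F xinf) h_convex eta3.
pose tau := Rmin (delta / (C + 1)) (Rmin 1 (eta / (3 * (rho + 1)))).
have tau0 : 0 < tau.
  by apply: Rmin_glb_lt; [|apply: Rmin_glb_lt]; try apply: Rdiv_lt_0_compat; lra.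
have [N1 close] := conv tau tau0; have [N2 small_gap] := gap_vanishes eta3.
set K := maxn N1 N2; set v := vsub (x K) xinf.
have vt : enorm v < tau by exact: close (leq_maxl _ _).
have v0 := enorm_ge0 v.
have [t1 t2] : enorm v < delta / (C + 1) /\ enorm v < Rmin 1 (eta / (3 * (rho + 1))).
  by split; apply: Rlt_le_trans vt _; [exact: Rmin_l | exact: Rmin_r].
have w_small : forall i, Rabs (mapply (J xinf) v i) <= delta.
  move=> i; apply: Rle_trans (HC v i) _.
  have -> : delta = delta / (C + 1) * (C + 1) by field; lra.
  nra.
have model := proj1 (Rabs_le_inv (approx Xinf Binf (iterate_in_X K))).
rewrite /emodel -/v in model.
have err_small : rho / 2 * enorm v ^ 2 <= eta / 3.
  have v1 : enorm v <= 1 by have := Rmin_l 1 (eta / (3 * (rho + 1))); lra.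
  have v_eta : enorm v * (3 * (rho + 1)) <= eta.
    have -> : eta = eta / (3 * (rho + 1)) * (3 * (rho + 1)) by field; lra.
    have := Rmin_r 1 (eta / (3 * (rho + 1))); nra.
  nra.
have := usc _ w_small; have := small_gap K (leq_maxr _ _); lra.
Qed.

Lemma rate_bound k : 4 * distX k <= 2 * sqrt 2 * mu / beta * rate k.
Proof.
have rk := rate_pos k.
have mb : 0 < mu / beta by apply: Rdiv_lt_0_compat.
have D_rate : distX k <= mu / beta * rate k ^ 2.
  have -> : distX k = mu / beta * (kappa * distX k) by field; lra.
  by apply: Rmult_le_compat_l; [lra | exact: contraction].
(* 2 rate_k <= sqrt 2, since sqrt 2 rate_k <= 1 *)
have two : 2 * rate k <= sqrt 2.
  have := Rmult_le_compat_l _ _ _ (sqrt_pos 2) (rate_le k).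
  by rewrite -Rmult_assoc sqrt_sqrt; lra.
have := Rmult_le_compat_l _ _ _ (Rlt_le _ _ (Rmult_lt_0_compat _ _ mb rk)) two.
have -> : 2 * sqrt 2 * mu / beta * rate k = 2 * (mu / beta * rate k * sqrt 2) by field; lra.
lra.
Qed.

Lemma iterates_converge : exists xinf,
  (forall eta, 0 < eta -> exists N, forall k, (N <= k)%nat -> enorm (vsub (x k) xinf) < eta) /\
  (forall k, enorm (vsub (x k) xinf) <= 4 * distX k).
Proof.
apply: (@cauchy_limit n x (fun k => 4 * distX k)); first exact: displacement.
move=> eta eta0; have [N small] := @dist_vanishes (eta / 4) (ltac:(lra)).
by exists N => k Nk; have := small k Nk; lra.
Qed.

Lemma prox_linear_convergence :
  (forall k, eball xbar eps (x k)) /\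
  (forall k, distX k.+1 <= kappa * distX k ^ 2) /\
  (forall k, gap k.+1 <= beta / mu ^ 2 * gap k ^ 2) /\
  (exists xinf, Xstar xinf /\
     (forall e, 0 < e -> exists N, forall k, (N <= k)%nat -> enorm (vsub (x k) xinf) < e) /\
     (forall k, enorm (vsub (x k) xinf) <= 2 * sqrt 2 * mu / beta * rate k)).
Proof.
have [xinf [conv near]] := iterates_converge.
split; first exact: iterates_in_ball.
split; first exact: dist_quadratic.
split; first exact: gap_quadratic.
exists xinf; split; first exact: limit_minimizes.
by split=> // k; apply: Rle_trans (near k) _; exact: rate_bound.
Qed.

End ProxLinearIterates.

Unset Implicit Arguments.

Theorem theorem5p7 (n m : nat) (X : vec n -> Prop) (h : vec m -> R)
  (F : vec n -> vec m) (J : vec n -> mat m n)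
  (xbar : vec n) (eps mu rho beta : R) (x0 : vec n) (x : nat -> vec n) :
  enonempty X -> eclosed_set X -> econvex_set X ->
  econvex_fun h ->
  has_jacobian F J ->
  eargmin (fun y => h (F y)) X xbar ->
  0 < eps -> 0 < mu -> 0 < rho ->
  (forall z y, X z -> eball xbar eps z -> X y ->
     Rabs (h (F y) - emodel h F J z y) <= rho / 2 * (enorm (vsub y z)) ^ 2) ->
  (forall z, X z -> eball xbar eps z ->
     h (F z) - h (F xbar) >= mu * edist (eargmin (fun y => h (F y)) X) z) ->
  rho <= beta ->
  X x0 -> eball xbar (eps / 2) x0 ->
  h (F x0) - h (F xbar) <= Rmin (beta * eps ^ 2 / 25) (mu ^ 2 / (2 * beta)) ->
  x 0%nat = x0 ->
  (forall k, eargmin (fun y => emodel h F J (x k) y + beta / 2 * (enorm (vsub y (x k))) ^ 2)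
               X (x (S k))) ->
  (forall k, eball xbar eps (x k)) /\
  (forall k, edist (eargmin (fun y => h (F y)) X) (x (S k)) <=
             beta / mu * (edist (eargmin (fun y => h (F y)) X) (x k)) ^ 2) /\
  (forall k, h (F (x (S k))) - h (F xbar) <=
             beta / mu ^ 2 * (h (F (x k)) - h (F xbar)) ^ 2) /\
  (exists xinf, eargmin (fun y => h (F y)) X xinf /\
     (forall e, 0 < e -> exists N, forall k, (N <= k)%nat -> enorm (vsub (x k) xinf) < e) /\
     (forall k, enorm (vsub (x k) xinf) <=
        2 * sqrt 2 * mu / beta * Rpower (/ 2) (Rpower 2 (INR k - 1)))).
Proof.
move=> _ X_closed X_convex h_convex _ xbar_min _ mu_pos rho_pos approx sharp rho_le_beta
  x0_in_X x0_near x0_gap x0_eq prox_step; subst x0.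
exact: prox_linear_convergence X_closed X_convex h_convex xbar_min mu_pos rho_pos
  rho_le_beta approx sharp x0_in_X x0_near x0_gap prox_step.
Qed.
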